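(* Let $\mathbf{k}$ be an algebraically closed field of characteristic zero, let $X_\sigma$ be a normal affine toric variety over $\mathbf{k}$ without torus factors, and let $\pi:\mathbb{A}^r\to X_\sigma$, $G$ and $U$ be as in the context. Let $A=\mathbf{k}[x_1,\dots,x_r]^G$ be the algebra of $G$-invariant polynomials (identified with the algebra of regular functions on $X_\sigma$), let $\bar 0$ be the origin of $\mathbb{A}^r$ and $o=\pi(\bar 0)$. Then one can choose a collection of monomials generating $A$ such that the set $V\subset\mathbb{A}^r$ of common zeros of this collection is contained in $\pi^{-1}(o)$. Moreover, if $X_\sigma\neq U$, then $V\subset\pi^{-1}(X_\sigma\setminus U)$.
   Context: Notation: $N\cong\mathbb{Z}^n$ a lattice, $M$ its dual with pairing $\langle\cdot,\cdot\rangle$, $\sigma\subset N_{\mathbb R}$ a strongly convex rational polyhedral cone, $X_\sigma=\mathrm{Spec}\,\mathbf{k}[\sigma^\vee\cap M]$ (characters $\chi^m$). ''No torus factors'' means every invertible regular function on $X_\sigma$ is constant. $\rho_1,\dots,\rho_r\in N$ are the primitive generators of the extremal rays of $\sigma$. With coordinates $x_1,\dots,x_r$ on $\mathbb{A}^r$, $G=\{(t_1,\dots,t_r)\in\mathbb{G}_m^r:\prod_i t_i^{\langle m,\rho_i\rangle}=1\ \forall m\in M\}$ acts on $\mathbb A^r$ coordinatewise, and $\pi:\mathbb{A}^r\to\mathbb{A}^r/\!/G\cong X_\sigma$ is the categorical quotient, given by $\pi^*(\chi^m)=\prod_{l=1}^r x_l^{\langle m,\rho_l\rangle}$. $U$ is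 the set of $u\in X_\sigma$ such that $\pi^{-1}(u)$ is a single $G$-orbit. *)

From HB Require Import structures.
From mathcomp Require Import all_boot all_order all_algebra.
From mathcomp Require Import mpoly.
Set Implicit Arguments. Unset Strict Implicit. Unset Printing Implicit Defensive.
Import Order.TTheory GRing.Theory Num.Theory.
Local Open Scope ring_scope.

(* N = M = Z^n; vectors are functions 'I_n -> int.
   rho : 'I_r -> 'I_n -> int lists the candidate ray generators rho_1..rho_r. *)

Definition pairing (n : nat) (m v : 'I_n -> int) : int := \sum_(j < n) m j * v j.

Definition in_cone (n r : nat) (rho : 'I_r -> 'I_n -> int) (v : 'I_n -> rat) : Prop :=
  exists lam : 'I_r -> rat, (forall i, 0 <= lam i) /\
    forall j, v j = \sum_(i < r) lam i * (rho i j)%:~R.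

Definition on_ray (n : nat) (v w : 'I_n -> rat) : Prop :=
  exists c : rat, 0 <= c /\ forall j, w j = c * v j.

Definition strongly_convex (n r : nat) (rho : 'I_r -> 'I_n -> int) : Prop :=
  forall v, in_cone rho v -> in_cone rho (fun j => - v j) -> forall j, v j = 0.

Definition extremal_ray_gen (n r : nat) (rho : 'I_r -> 'I_n -> int)
    (v : 'I_n -> rat) : Prop :=
  [/\ exists j, v j != 0, in_cone rho v &
      forall a b, in_cone rho a -> in_cone rho b ->
        on_ray v (fun j => a j + b j) -> on_ray v a /\ on_ray v b].

Definition rhoQ (n r : nat) (rho : 'I_r -> 'I_n -> int) (i : 'I_r) : 'I_n -> rat :=
  fun j => (rho i j)%:~R.

Definition primitive_vec (n : nat) (w : 'I_n -> int) : Prop :=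
  (\big[gcdn/0%N]_(j < n) absz (w j))%N = 1%N.

Definition ray_generators (n r : nat) (rho : 'I_r -> 'I_n -> int) : Prop :=
  [/\ forall i i', (forall j, rho i j = rho i' j) -> i = i',
      forall i, primitive_vec (rho i),
      forall i, extremal_ray_gen rho (rhoQ rho i) &
      forall v, extremal_ray_gen rho v -> exists i, on_ray (rhoQ rho i) v].

Definition dual_mem (n r : nat) (rho : 'I_r -> 'I_n -> int) (m : 'I_n -> int) : Prop :=
  forall i, 0 <= pairing m (rho i).

(* No torus factors: the invertible elements of k[sigma^vee /\ M] are the
   c chi^m with c <> 0 and m in sigma^vee /\ -sigma^vee; so "every invertible
   regular function is constant" says sigma^vee /\ -sigma^vee /\ M = {0}. *)
Definition no_torus_factors (n r : nat) (rho : 'I_r -> 'I_n -> int) : Prop :=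
  forall m, dual_mem rho m -> dual_mem rho (fun j => - m j) -> forall j, m j = 0.

Definition Gmem (k : fieldType) (n r : nat) (rho : 'I_r -> 'I_n -> int)
    (t : 'I_r -> k) : Prop :=
  (forall i, t i != 0) /\
  forall m : 'I_n -> int, \prod_(i < r) t i ^ (pairing m (rho i)) = 1.

Definition act (k : fieldType) (r : nat) (t x : 'I_r -> k) : 'I_r -> k :=
  fun i => t i * x i.

(* k-points of X_sigma = Spec k[sigma^vee /\ M]: monoid homomorphisms
   (sigma^vee /\ M, +) -> (k, mult), i.e. values u(m) = chi^m(u);
   only the values on sigma^vee /\ M are meaningful. *)
Definition Xpoint (k : fieldType) (n r : nat) (rho : 'I_r -> 'I_n -> int)
    (u : ('I_n -> int) -> k) : Prop :=
  u (fun _ => 0) = 1 /\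
  forall m m', dual_mem rho m -> dual_mem rho m' ->
    u (fun j => m j + m' j) = u m * u m'.

Definition piX (k : fieldType) (n r : nat) (rho : 'I_r -> 'I_n -> int)
    (x : 'I_r -> k) : ('I_n -> int) -> k :=
  fun m => \prod_(l < r) x l ^ (pairing m (rho l)).

Definition in_fiber (k : fieldType) (n r : nat) (rho : 'I_r -> 'I_n -> int)
    (u : ('I_n -> int) -> k) (x : 'I_r -> k) : Prop :=
  forall m, dual_mem rho m -> piX rho x m = u m.

Definition in_U (k : fieldType) (n r : nat) (rho : 'I_r -> 'I_n -> int)
    (u : ('I_n -> int) -> k) : Prop :=
  exists x0 : 'I_r -> k, forall x,
    in_fiber rho u x <-> exists t, Gmem rho t /\ forall i, x i = act t x0 i.

Definition G_invariant (k : fieldType) (n r : nat) (rho : 'I_r -> 'I_n -> int)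
    (f : {mpoly k[r]}) : Prop :=
  forall t, Gmem rho t -> forall x : 'I_r -> k, f.@[act t x] = f.@[x].

Definition generates_inv (k : fieldType) (n r : nat) (rho : 'I_r -> 'I_n -> int)
    (S : 'X_{1..r} -> Prop) : Prop :=
  forall f, G_invariant rho f ->
  forall B : {mpoly k[r]} -> Prop,
    (forall c : k, B c%:MP) ->
    (forall p q, B p -> B q -> B (p + q)) ->
    (forall p q, B p -> B q -> B (p * q)) ->
    (forall m, S m -> B 'X_[m]) ->
    B f.

From HB Require Import structures.
From mathcomp Require Import all_boot all_order all_algebra.
From mathcomp Require Import mpoly.
From mathcomp Require Import ring zify.
From Stdlib Require Import FunctionalExtensionality ClassicalEpsilon Classical.
Set Implicit Arguments. Unset Strict Implicit. Unset Printing Implicit Defensive.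
Import Order.TTheory GRing.Theory Num.Theory.
Local Open Scope ring_scope.

(* Every monomial occurring in a G-invariant polynomial is G-invariant (in
   characteristic 0 a polynomial identity can be checked pointwise), so the
   nonconstant invariant monomials generate A.  For m in the dual cone,
   chi^m pulls back to the monomial x^(<m, rho_l>)_l, which is invariant and
   nonconstant unless chi^m = 1; hence at a common zero x every nonconstant
   chi^m vanishes and pi(x) = o.  If moreover pi(x) lies in U, then o does:
   the fiber over o is the orbit of 0, i.e. {0}, so no coordinate vector e_i
   lies in it, and this produces for each i a dual vector positive on rho_i
   and vanishing on the other rays.  Scaling these gives a "dual basis"
   <w_i, rho_l> = D [i = l].  With such a basis every point u of X_sigma lies
   in U: the zeros of a point of the fiber are read off from u(w_i), and on
   the remaining coordinates the points of the fiber correspond to extensions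
   to Z^r of a character of a subgroup; these exist and differ by elements of
   G because k^* is divisible.  Hence pi(x) in U forces X_sigma = U. *)

Section Pairing.
Variable n : nat.
Implicit Types m v : 'I_n -> int.

Lemma pairing0 v : pairing (fun _ => 0) v = 0.
Proof. by rewrite /pairing big1 // => j _; rewrite mul0r. Qed.

Lemma pairingD m (m' : 'I_n -> int) v :
  pairing (fun j => m j + m' j) v = pairing m v + pairing m' v.
Proof. by rewrite /pairing -big_split; apply: eq_bigr => j _; rewrite mulrDl. Qed.

Lemma pairingN m v : pairing (fun j => - m j) v = - pairing m v.
Proof. by rewrite /pairing -sumrN; apply: eq_bigr => j _; rewrite mulNr. Qed.

Lemma pairingB m (m' : 'I_n -> int) v :
  pairing (fun j => m j - m' j) v = pairing m v - pairing m' v.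
Proof. by rewrite -pairingN -pairingD. Qed.

Lemma pairingZ (c : int) m v : pairing (fun j => c * m j) v = c * pairing m v.
Proof. by rewrite /pairing mulr_sumr; apply: eq_bigr => j _; rewrite mulrA. Qed.

Lemma pairing_sum (I : Type) (s : seq I) (P : pred I) (F : I -> 'I_n -> int) v :
  pairing (fun j => \sum_(i <- s | P i) F i j) v = \sum_(i <- s | P i) pairing (F i) v.
Proof. by rewrite /pairing; under eq_bigr do rewrite mulr_suml; exact: exchange_big. Qed.

End Pairing.

Lemma exprz_absz (R : unitRingType) (x : R) (z : int) : 0 <= z -> x ^ z = x ^+ `|z|%N.
Proof. by case: z. Qed.

Lemma base_expansion_inj (N : nat) r (a b : 'I_r -> nat) :
  (forall i, a i < N)%N -> (forall i, b i < N)%N ->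
  (\sum_(i < r) a i * N ^ i = \sum_(i < r) b i * N ^ i)%N -> a =1 b.
Proof.
elim: r a b => [|r IH] a b ha hb e i; first by case: i.
have expand c : (\sum_(i < r.+1) c i * N ^ i =
    c ord0 + (\sum_(i < r) c (lift ord0 i) * N ^ i) * N)%N.
  rewrite big_ord_recl expn0 muln1 big_distrl; congr (_ + _)%N.
  by apply: eq_bigr => j _; rewrite expnS mulnCA mulnC.
rewrite !expand !(addnC (_ ord0)) in e.
have e0 : a ord0 = b ord0.
  by have := congr1 (modn^~ N) e; rewrite /= !modnMDl !modn_small.
have eS : (\sum_(i < r) a (lift ord0 i) * N ^ i = \sum_(i < r) b (lift ord0 i) * N ^ i)%N.
  have N_gt0 : (0 < N)%N by apply: leq_ltn_trans (ha ord0).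
  by have := congr1 (divn^~ N) e; rewrite /= !divnMDl // !divn_small // !addn0.
case: (unliftP ord0 i) => [j ->|->] //.
exact: (IH (fun j => a (lift ord0 j)) (fun j => b (lift ord0 j))).
Qed.

Section PolynomialIdentity.
Variables (k : fieldType) (r : nat).
Hypothesis k_pchar0 : [pchar k] =i pred0.

Lemma pchar0_natr_inj : injective (fun i : nat => i%:R : k).
Proof.
move: k_pchar0 => /pcharf0P natr_eq0.
suff le_inj i j : (i <= j)%N -> i%:R = j%:R :> k -> i = j.
  by move=> i j /= e; case: (leqP i j) => [/le_inj->|/ltnW/le_inj->].
move=> le_ij e; apply/eqP; rewrite eqn_leq le_ij -subn_eq0 -natr_eq0 natrB //.
by rewrite e subrr eqxx.
Qed.

(* Kronecker substitution x_i := s ^+ (N ^ i) sends distinct monomials of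
   degree < N to distinct powers of s. *)
Lemma mpoly_meval_eq0 (p : {mpoly k[r]}) : (forall x, p.@[x] = 0) -> p = 0.
Proof.
move=> p_eq0; set N := msize p.
have lt_N a : a \in msupp p -> forall i, (a i < N)%N.
  move=> a_p i; apply: leq_ltn_trans (msize_mdeg_lt a_p).
  by rewrite mdegE (bigD1 i) //= leq_addr.
pose kron (a : 'X_{1..r}) := (\sum_(i < r) a i * N ^ i)%N.
pose q : {poly k} := \sum_(a <- msupp p) p@_a *: 'X^(kron a).
have hornerq s : q.[s] = p.@[fun i => s ^+ (N ^ i)].
  rewrite mevalE horner_sum; apply: eq_bigr => a _.
  rewrite hornerZ hornerXn -prodrXr; congr (_ * _).
  by apply: eq_bigr => i _; rewrite -exprM mulnC.
have q0 : q = 0.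
  apply: (@roots_geq_poly_eq0 _ _ [seq i%:R | i <- iota 0 (size q)]).
  - by apply/allP => _ /mapP [i _ ->]; rewrite /root hornerq p_eq0.
  - by rewrite map_inj_uniq ?iota_uniq //; apply: pchar0_natr_inj.
  - by rewrite size_map size_iota.
apply/mpolyP => a; rewrite mcoeff0.
have [a_p|] := boolP (a \in msupp p); last exact: memN_msupp_eq0.
have := congr1 (fun q : {poly k} => q`_(kron a)) q0; rewrite /= coef0 coef_sumMXn.
rewrite big_mkcond (bigD1_seq a) ?msupp_uniq //= eqxx big_seq_cond big1 ?addr0 //.
move=> b /andP [b_p b_neq_a]; case: eqP => // kron_ba.
have eq_ba : b = a by apply/mnmP/(base_expansion_inj (lt_N b b_p) (lt_N a a_p)).
by rewrite eq_ba eqxx in b_neq_a.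
Qed.

Lemma mpoly_meval_inj (p q : {mpoly k[r]}) : (forall x, p.@[x] = q.@[x]) -> p = q.
Proof.
move=> e; apply/eqP; rewrite -subr_eq0; apply/eqP.
by apply: mpoly_meval_eq0 => x; rewrite mevalB e subrr.
Qed.

End PolynomialIdentity.

Definition isolated_ray n r (rho : 'I_r -> 'I_n -> int) (i : 'I_r) : Prop :=
  exists m, [/\ dual_mem rho m, 0 < pairing m (rho i) &
                forall l, l != i -> pairing m (rho l) = 0].

Section InvariantMonomials.
Variables (k : fieldType) (n r : nat) (rho : 'I_r -> 'I_n -> int).
Implicit Types (t x : 'I_r -> k) (a : 'X_{1..r}) (m : 'I_n -> int).

Definition invariant_monomial a : Prop :=
  a != 0%MM /\ G_invariant rho ('X_[a] : {mpoly k[r]}).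

Definition dual_monomial m : 'X_{1..r} := [multinom `|pairing m (rho i)|%N | i < r].

Lemma mevalX_act t x a :
  ('X_[a] : {mpoly k[r]}).@[act t x] = \prod_i t i ^+ a i * ('X_[a] : {mpoly k[r]}).@[x].
Proof. by rewrite !mevalX -big_split; apply: eq_bigr => i _; rewrite exprMn. Qed.

Lemma G_invariantX a :
  (forall t, Gmem rho t -> \prod_i t i ^+ a i = 1) ->
  G_invariant rho ('X_[a] : {mpoly k[r]}).
Proof. by move=> ta1 t t_G x; rewrite mevalX_act ta1 ?mul1r. Qed.

Lemma G_invariant_msupp (f : {mpoly k[r]}) t a :
  [pchar k] =i pred0 -> G_invariant rho f -> Gmem rho t -> a \in msupp f ->
  \prod_i t i ^+ a i = 1.
Proof.
move=> k_pchar0 f_inv t_G a_f.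
pose ft := \sum_(b <- msupp f) (f@_b * \prod_i t i ^+ b i) *: ('X_[b] : {mpoly k[r]}).
have ft_f : ft = f.
  apply: mpoly_meval_inj => // x; rewrite -(f_inv t t_G x) [RHS]mevalE /ft raddf_sum.
  apply: eq_bigr => b _; rewrite /= mevalZ mevalX -mulrA -big_split /=.
  by congr (_ * _); apply: eq_bigr => i _; rewrite exprMn.
have := congr1 (mcoeff a) ft_f; rewrite /ft raddf_sum (bigD1_seq a) ?msupp_uniq //=.
rewrite [X in _ + X]big1 => [|b b_a]; last first.
  by rewrite -mul_mpolyC mcoeffCM mcoeffX (negbTE b_a) mulr0.
rewrite -mul_mpolyC mcoeffCM mcoeffX eqxx mulr1 addr0 -[RHS]mulr1 => /mulfI; apply.
by rewrite mcoeff_eq0 a_f.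
Qed.

Lemma generates_inv_monomials :
  [pchar k] =i pred0 -> generates_inv k rho invariant_monomial.
Proof.
move=> k_pchar0 f f_inv B BC BD BM Bmon.
rewrite [f]mpolyE big_seq; apply: (big_ind B) => //; first by rewrite -mpolyC0.
move=> a a_f; rewrite -mul_mpolyC; apply: BM => //.
have [->|a_neq0] := eqVneq a 0%MM; first by rewrite mpolyX0 -mpolyC1.
apply: Bmon; split => //; apply: G_invariantX => t t_G.
exact: G_invariant_msupp a_f.
Qed.

Lemma piX_dual_monomial x m :
  dual_mem rho m -> piX rho x m = ('X_[dual_monomial m] : {mpoly k[r]}).@[x].
Proof.
by move=> m_dual; rewrite mevalX; apply: eq_bigr => l _; rewrite mnmE exprz_absz.
Qed.

Lemma G_invariant_dual_monomial m :
  dual_mem rho m -> G_invariant rho ('X_[dual_monomial m] : {mpoly k[r]}).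
Proof.
move=> m_dual; apply: G_invariantX => t [_ tG].
by rewrite -[RHS](tG m); apply: eq_bigr => i _; rewrite mnmE exprz_absz.
Qed.

Lemma piX_pairing_eq0 x m : (forall l, pairing m (rho l) = 0) -> piX rho x m = 1.
Proof. by move=> m0; rewrite /piX big1 // => l _; rewrite m0 expr0z. Qed.

Lemma piX_eq0 x m l : pairing m (rho l) != 0 -> x l = 0 -> piX rho x m = 0.
Proof.
by move=> ml xl; rewrite /piX (bigD1 l) //= xl exp0rz (negbTE ml) mul0r.
Qed.

Lemma common_zero_in_fiber0 x :
  (forall a, invariant_monomial a -> ('X_[a] : {mpoly k[r]}).@[x] = 0) ->
  in_fiber rho (piX rho (fun _ => 0)) x.
Proof.
move=> x_zero m m_dual.
have [/forallP m0|] := boolP [forall l, pairing m (rho l) == 0].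
  by rewrite !piX_pairing_eq0 // => l; apply/eqP.
rewrite negb_forall => /existsP [l ml].
rewrite [RHS](piX_eq0 ml) // piX_dual_monomial // x_zero //.
split; last exact: G_invariant_dual_monomial.
by apply/negP => /eqP/mnmP/(_ l); rewrite mnmE mnm0E => /eqP; rewrite absz_eq0 (negbTE ml).
Qed.

Lemma in_U_eq (u u' : ('I_n -> int) -> k) :
  (forall m, dual_mem rho m -> u m = u' m) -> in_U rho u -> in_U rho u'.
Proof.
move=> uu' [x0 orbit_x0]; exists x0 => x; rewrite -orbit_x0.
by split=> x_fiber m m_dual; rewrite x_fiber // uu'.
Qed.

(* The fiber over the origin is the orbit of 0, so it cannot contain a
   coordinate vector. *)
Lemma in_U0_isolated_ray :
  in_U rho (piX rho (fun _ => 0 : k)) -> forall i, isolated_ray rho i.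
Proof.
move=> [x0 orbit_x0] i.
have x0_eq0 l : x0 l = 0.
  have [t [[t_neq0 _] /(_ l)]] := (orbit_x0 (fun _ => 0)).1 (fun _ _ => erefl).
  by move/esym/eqP; rewrite mulf_eq0 (negbTE (t_neq0 l)) => /eqP.
pose e l : k := (l == i)%:R.
have e_notin : ~ in_fiber rho (piX rho (fun _ => 0)) e.
  move=> /(orbit_x0 e).1 [t [_ /(_ i)]]; rewrite /act x0_eq0 mulr0 /e eqxx.
  by move/eqP; rewrite oner_eq0.
apply: NNPP => no_m; apply: e_notin => m m_dual.
have [[l [l_i ml]]|] := classic (exists l, l != i /\ pairing m (rho l) != 0).
  by rewrite !(piX_eq0 ml) // /e (negbTE l_i).
move=> others0; have ml0 l : l != i -> pairing m (rho l) = 0.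
  by move=> l_i; apply/eqP; apply: contra_notT others0 => ml; exists l.
suff m0 l : pairing m (rho l) = 0 by rewrite !piX_pairing_eq0.
case: (eqVneq l i) => [->|/ml0] //.
apply/eqP; apply: contra_notT no_m => mi; exists m; split=> //.
by rewrite lt_def mi m_dual.
Qed.

End InvariantMonomials.

Definition dual_basis n r (rho : 'I_r -> 'I_n -> int) (D : int) (w : 'I_r -> 'I_n -> int) :=
  forall i l, pairing (w i) (rho l) = if l == i then D else 0.

Lemma exists_dual_basis n r (rho : 'I_r -> 'I_n -> int) :
  (forall i, isolated_ray rho i) ->
  exists (D : int) (w : 'I_r -> 'I_n -> int), 0 < D /\ dual_basis rho D w.
Proof.
move=> /choice [m mP]; pose c i := pairing (m i) (rho i).
exists (\prod_i c i), (fun i j => (\prod_(l | l != i) c l) * m i j); split.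
  by apply: prodr_gt0 => i _; case: (mP i).
move=> i l; rewrite pairingZ; case: eqP => [->|/eqP l_i].
  by rewrite [RHS](bigD1 i) //= mulrC.
by case: (mP i) => _ _ ->; rewrite ?mulr0.
Qed.

Lemma ex_minn_classic (P : nat -> Prop) :
  (exists n, P n) -> exists n, P n /\ forall m, P m -> (n <= m)%N.
Proof.
move=> [n Pn]; elim/ltn_ind: n Pn => n IH Pn.
have [[m [Pm lt_mn]]|no_less] := classic (exists m, P m /\ (m < n)%N).
  exact: IH lt_mn Pm.
exists n; split=> // m Pm; rewrite leqNgt; apply/negP => lt_mn.
by apply: no_less; exists m.
Qed.

Lemma closed_field_root (k : closedFieldType) (d : nat) (c : k) :
  (0 < d)%N -> exists y, y ^+ d = c.
Proof.
move=> d_gt0; have /closed_rootP [y] : size ('X^d - c%:P : {poly k}) != 1%N.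
  by rewrite size_XnsubC // eqSS -lt0n.
by rewrite rootE !hornerE subr_eq0 => /eqP; exists y.
Qed.

Section ProductsOfPowers.
Variables (F : fieldType) (s : nat) (y : 'I_s -> F).
Hypothesis y_neq0 : forall i, y i != 0.

Lemma prod_exprz_neq0 (a : 'I_s -> int) : \prod_i y i ^ a i != 0.
Proof. by apply/prodf_neq0 => i _; apply: expfz_neq0. Qed.

Lemma prod_exprzB (a b : 'I_s -> int) :
  \prod_i y i ^ (a i - b i) = \prod_i y i ^ a i / \prod_i y i ^ b i.
Proof. by rewrite -prodf_div; apply: eq_bigr => i _; rewrite expfzDr // invr_expz. Qed.

End ProductsOfPowers.

(* A partial character of Z^s with values in k^* is encoded by its graph R,
   a subgroup of Z^s x k^* meeting {0} x k^* only in (0, 1). Since k^* is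
   divisible, it extends to a character (a i) |-> \prod_i y i ^ a i. *)
Section CyclicCharacterGraph.
Variables (F : fieldType) (R : int -> F -> Prop).
Hypotheses (R_neq0 : forall a z, R a z -> z != 0)
  (RB : forall a z b w, R a z -> R b w -> R (a - b) (z / w))
  (R0 : forall z, R 0 z -> z = 1).

Lemma char_graph_cyclic a0 z0 :
  R a0 z0 -> a0 != 0 ->
  exists (d : nat) (zd : F), [/\ (0 < d)%N, zd != 0 &
    forall a z, R a z -> (d%:Z %| a)%Z /\ z = zd ^ (a %/ d%:Z)%Z].
Proof.
move=> Ra0 a0_neq0.
have R01 : R 0 1.
  by rewrite -(subrr a0) -(divff (R_neq0 Ra0)); apply: RB.
have RN a z : R a z -> R (- a) z^-1.
  by move=> Raz; rewrite -sub0r -div1r; apply: RB.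
pose Rpos d := (0 < d)%N /\ exists z, R d%:Z z.
have [d [[d_gt0 [zd Rd]] d_min]] : exists d, Rpos d /\ forall m, Rpos m -> (d <= m)%N.
  apply: ex_minn_classic; exists `|a0|%N; split; first by rewrite absz_gt0.
  have [a0_ge0|a0_lt0] := lerP 0 a0; first by exists z0; rewrite gez0_abs.
  by exists z0^-1; rewrite ltz0_abs //; apply: RN.
have Rmul q : R (q * d%:Z) (zd ^ q).
  have Rmuln (q' : nat) : R (q'%:Z * d%:Z) (zd ^+ q').
    elim: q' => [|q' IH]; first by rewrite mul0r expr0.
    have := RB IH (RN _ _ Rd).
    by rewrite opprK invrK -exprSr -[in q'.+1]addn1 PoszD mulrDl mul1r.
  by case: q => q'; rewrite ?NegzE ?mulNr -?exprnN; [apply: Rmuln | apply/RN/Rmuln].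
have d_neq0 : d%:Z != 0 by rewrite eqz_nat -lt0n.
exists d, zd; split=> // [|a z Raz]; first exact: R_neq0 Rd.
have Rmod : R (a %% d%:Z)%Z (z / zd ^ (a %/ d%:Z)%Z).
  have := RB Raz (Rmul (a %/ d%:Z)%Z).
  by rewrite [X in R (X - _)](divz_eq a d%:Z) addrAC subrr add0r.
have mod0 : (a %% d%:Z)%Z = 0.
  apply/eqP; apply: contraTT (ltz_mod a d_neq0) => mod_neq0.
  have /d_min : Rpos `|(a %% d%:Z)%Z|%N.
    split; first by rewrite absz_gt0.
    by exists (z / zd ^ (a %/ d%:Z)%Z); rewrite gez0_abs // modz_ge0.
  by rewrite -lez_nat gez0_abs ?modz_ge0 // -leNgt.
rewrite mod0 in Rmod; split; first exact/dvdz_mod0P.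
have zdq_neq0 : zd ^ (a %/ d%:Z)%Z != 0 by rewrite expfz_neq0 // (R_neq0 Rd).
by rewrite -(divfK zdq_neq0 z) (R0 Rmod) mul1r.
Qed.

End CyclicCharacterGraph.

Section CharacterExtension.
Variable k : closedFieldType.

Lemma char_extend1 (R : int -> k -> Prop) :
  (forall a z, R a z -> z != 0) ->
  (forall a z b w, R a z -> R b w -> R (a - b) (z / w)) ->
  (forall z, R 0 z -> z = 1) ->
  exists y : k, y != 0 /\ forall a z, R a z -> z = y ^ a.
Proof.
move=> R_neq0 RB R0.
have [[a0 [z0 [Ra0 a0_neq0]]]|R_trivial] :=
  classic (exists a z, R a z /\ a != 0); last first.
  exists 1; split=> [|a z Raz]; first exact: oner_neq0.
  have a0 : a = 0 by apply/eqP; apply: contra_notT R_trivial => ?; exists a, z.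
  by rewrite exp1rz (R0 z) // -a0.
have [d [zd [d_gt0 zd_neq0 R_zd]]] := char_graph_cyclic R_neq0 RB R0 Ra0 a0_neq0.
have [y yd] := closed_field_root zd d_gt0.
exists y; split.
  apply: contraNneq zd_neq0 => y0.
  by rewrite -yd y0 expr0n eqn0Ngt d_gt0.
move=> a z /R_zd [/divzK {2}<- ->].
by rewrite -yd exprnP exprz_exp mulrC.
Qed.

Lemma char_extend s (R : ('I_s -> int) -> k -> Prop) :
  (forall a z, R a z -> z != 0) ->
  (forall a z b w, R a z -> R b w -> R (fun i => a i - b i) (z / w)) ->
  (forall a z, R a z -> (forall i, a i = 0) -> z = 1) ->
  exists y : 'I_s -> k, (forall i, y i != 0) /\
    forall a z, R a z -> z = \prod_i y i ^ a i.
Proof.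
elim: s R => [|s IH] R R_neq0 RB R0.
  exists (fun _ => 1); split=> [i|a z Raz]; first exact: oner_neq0.
  by rewrite big_ord0 (R0 a z) // => -[].
pose Rtail a' z := exists a, [/\ R a z, a ord0 = 0 & forall i, a (lift ord0 i) = a' i].
have [y' [y'_neq0 Ry']] : exists y' : 'I_s -> k, (forall i, y' i != 0) /\
    forall a' z, Rtail a' z -> z = \prod_i y' i ^ a' i.
  apply: IH => [a' z [a [Raz _ _]]|a' z b' w [a [Raz a0 aa']] [b [Rbw b0 bb']]|a' z].
  - exact: R_neq0 Raz.
  - exists (fun i => a i - b i); split; [exact: RB | by rewrite a0 b0 subrr | ].
    by move=> i; rewrite aa' bb'.
  - move=> [a [Raz a0 aa']] a'0; apply: (R0 a) => // i.
    by case: (unliftP ord0 i) => [j ->|->] //; rewrite aa' a'0.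
pose P (a : 'I_s.+1 -> int) := \prod_i y' i ^ a (lift ord0 i).
pose Rhead c z1 := exists a z, [/\ R a z, c = a ord0 & z1 = z / P a].
have [y0 [y0_neq0 Ry0]] : exists y0 : k, y0 != 0 /\ forall c z1, Rhead c z1 -> z1 = y0 ^ c.
  apply: char_extend1 => [c z1 [a [z [Raz _ ->]]]|c z1 c' w1|z1].
  - by rewrite mulf_neq0 ?invr_eq0 ?prod_exprz_neq0 ?(R_neq0 _ _ Raz).
  - move=> [a [z [Raz -> ->]]] [b [w [Rbw -> ->]]].
    exists (fun i => a i - b i), (z / w); split; [exact: RB | by [] |].
    rewrite /P prod_exprzB //; field.
    by rewrite (R_neq0 _ _ Rbw) !prod_exprz_neq0.
  - move=> [a [z [Raz a0 ->]]]; rewrite (Ry' (fun i => a (lift ord0 i)) z) ?divff //.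
      exact: prod_exprz_neq0.
    by exists a; split.
exists (fun i => if unlift ord0 i is Some j then y' j else y0); split.
  by move=> i; case: unliftP.
move=> a z Raz; rewrite big_ord_recl unlift_none.
under eq_bigr do rewrite liftK.
rewrite -(Ry0 (a ord0) (z / P a)); last by exists a, z.
by rewrite divfK // prod_exprz_neq0.
Qed.

End CharacterExtension.

Section DualCone.
Variables (n r : nat) (rho : 'I_r -> 'I_n -> int).
Implicit Types m : 'I_n -> int.

Lemma dual_memD m m' :
  dual_mem rho m -> dual_mem rho m' -> dual_mem rho (fun j => m j + m' j).
Proof. by move=> m_dual m'_dual l; rewrite pairingD addr_ge0. Qed.

Lemma dual_memZ (c : int) m : 0 <= c -> dual_mem rho m -> dual_mem rho (fun j => c * m j).
Proof. by move=> c_ge0 m_dual l; rewrite pairingZ mulr_ge0. Qed.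

Lemma pairing_inj m m' :
  no_torus_factors rho -> (forall l, pairing m (rho l) = pairing m' (rho l)) -> m = m'.
Proof.
move=> no_torus mm'; apply: functional_extensionality => j; apply/eqP; rewrite -subr_eq0.
apply/eqP/(no_torus (fun j => m j - m' j)) => l.
  by rewrite pairingB mm' subrr.
by rewrite pairingN pairingB mm' subrr oppr0.
Qed.

Definition face_dual (I : pred 'I_r) m : Prop :=
  dual_mem rho m /\ forall l, ~~ I l -> pairing m (rho l) = 0.

Lemma face_dualD I m m' :
  face_dual I m -> face_dual I m' -> face_dual I (fun j => m j + m' j).
Proof.
move=> [m_dual m_face] [m'_dual m'_face]; split; first exact: dual_memD.
by move=> l l_I; rewrite pairingD m_face ?m'_face ?addr0.
Qed.

End DualCone.

Section Xpoints.
Variables (k : fieldType) (n r : nat) (rho : 'I_r -> 'I_n -> int) (u : ('I_n -> int) -> k).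
Hypothesis u_X : Xpoint rho u.

Lemma XpointMn m (c : nat) : dual_mem rho m -> u (fun j => c%:Z * m j) = u m ^+ c.
Proof.
move=> m_dual; elim: c => [|c IH].
  rewrite expr0 -(proj1 u_X); apply: congr1.
  by apply: functional_extensionality => j; rewrite mul0r.
rewrite exprSr -IH -(proj2 u_X) //; last exact: dual_memZ.
apply: congr1; apply: functional_extensionality => j.
by rewrite -addn1 PoszD mulrDl mul1r.
Qed.

Lemma Xpoint_sum (I : Type) (s : seq I) (F : I -> 'I_n -> int) :
  (forall i, dual_mem rho (F i)) ->
  u (fun j => \sum_(i <- s) F i j) = \prod_(i <- s) u (F i).
Proof.
move=> F_dual; elim: s => [|i s IH].
  rewrite big_nil -(proj1 u_X); apply: congr1.
  by apply: functional_extensionality => j; rewrite big_nil.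
have s_dual : dual_mem rho (fun j => \sum_(i <- s) F i j).
  by move=> l; rewrite pairing_sum sumr_ge0 // => i' _; apply: F_dual.
rewrite big_cons -IH -(proj2 u_X) //; apply: congr1.
by apply: functional_extensionality => j; rewrite big_cons.
Qed.

End Xpoints.

Section CharacterExtensionToTorus.
Variables (k : closedFieldType) (n r : nat) (rho : 'I_r -> 'I_n -> int).

Lemma monoid_char_extend (L : ('I_n -> int) -> Prop) (u : ('I_n -> int) -> k) :
  no_torus_factors rho ->
  (forall m m', L m -> L m' -> L (fun j => m j + m' j)) ->
  (forall m, L m -> u m != 0) ->
  (forall m m', L m -> L m' -> u (fun j => m j + m' j) = u m * u m') ->
  exists y : 'I_r -> k, (forall i, y i != 0) /\
    forall m, L m -> u m = \prod_i y i ^ pairing m (rho i).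
Proof.
move=> no_torus LD u_neq0 uD.
pose R a z := exists m1 m2, [/\ L m1, L m2,
  forall l, a l = pairing m1 (rho l) - pairing m2 (rho l) & z = u m1 / u m2].
have [y [y_neq0 Ry]] : exists y : 'I_r -> k, (forall i, y i != 0) /\
    forall a z, R a z -> z = \prod_i y i ^ a i.
  apply: char_extend => [a z [m1 [m2 [L1 L2 _ ->]]]|a z b w|a z].
  - by rewrite mulf_neq0 ?invr_eq0 ?u_neq0.
  - move=> [m1 [m2 [L1 L2 a_m ->]]] [m1' [m2' [L1' L2' b_m ->]]].
    exists (fun j => m1 j + m2' j), (fun j => m2 j + m1' j); split; try exact: LD.
      by move=> l; rewrite a_m b_m !pairingD; ring.
    by rewrite !uD //; field; rewrite !u_neq0.
  - move=> [m1 [m2 [L1 L2 a_m ->]]] a0.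
    have -> : m1 = m2.
      by apply: (pairing_inj no_torus) => l; apply/eqP; rewrite -subr_eq0 -a_m a0.
    by rewrite divff ?u_neq0.
exists y; split=> // m Lm; apply: Ry.
(* 0 need not lie in L, so (m + m, m) serves as a witness for m. *)
exists (fun j => m j + m j), m; split=> //; first exact: LD.
  by move=> l; rewrite pairingD addrK.
by rewrite uD // mulfK ?u_neq0.
Qed.

Lemma Gmem_extend (I : pred 'I_r) (c : 'I_r -> k) :
  (forall i, c i != 0) ->
  (forall m, (forall l, ~~ I l -> pairing m (rho l) = 0) ->
     \prod_l c l ^ pairing m (rho l) = 1) ->
  exists t, Gmem rho t /\ forall i, I i -> t i = c i.
Proof.
move=> c_neq0 c_face.
pose R a z := exists m b, [/\ forall l, ~~ I l -> b l = 0,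
  forall l, a l = pairing m (rho l) + b l & z = \prod_l c l ^ b l].
have [t [t_neq0 Rt]] : exists t : 'I_r -> k, (forall i, t i != 0) /\
    forall a z, R a z -> z = \prod_i t i ^ a i.
  apply: char_extend => [a z [m [b [_ _ ->]]]|a z a' z'|a z].
  - exact: prod_exprz_neq0.
  - move=> [m [b [b_I a_mb ->]]] [m' [b' [b'_I a'_mb ->]]].
    exists (fun j => m j - m' j), (fun l => b l - b' l); split.
    + by move=> l l_I; rewrite b_I ?b'_I ?subr0.
    + by move=> l; rewrite a_mb a'_mb pairingB; ring.
    + by rewrite prod_exprzB.
  - move=> [m [b [b_I a_mb ->]]] a0.
    have b_m l : b l = - pairing m (rho l).
      by apply/eqP; rewrite -addr_eq0 addrC -a_mb a0.
    under eq_bigr do rewrite b_m -invr_expz.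
    rewrite prodfV c_face ?invr1 // => l l_I.
    by apply/eqP; rewrite -oppr_eq0 -b_m b_I.
exists t; split.
  split=> // m; symmetry; apply: Rt; exists m, (fun _ => 0); split=> // [l|].
    by rewrite addr0.
  by rewrite big1 // => l _; rewrite expr0z.
move=> i Ii; pose e l : int := (l == i)%:R.
have prod_e (y : 'I_r -> k) : \prod_l y l ^ e l = y i.
  rewrite (bigD1 i) //= /e eqxx expr1z big1 ?mulr1 // => l /negbTE ->.
  exact: expr0z.
rewrite -prod_e -(prod_e c); symmetry; apply: Rt.
exists (fun _ => 0), e; split=> [l l_I|l|//].
  by rewrite /e; case: eqP => // li; rewrite li Ii in l_I.
by rewrite pairing0 add0r.
Qed.

End CharacterExtensionToTorus.

Section DualBasis.
Variables (k : closedFieldType) (n r : nat) (rho : 'I_r -> 'I_n -> int).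
Variables (D : int) (w : 'I_r -> 'I_n -> int).
Hypotheses (D_gt0 : 0 < D) (w_basis : dual_basis rho D w).

Lemma dual_basis_dual i : dual_mem rho (w i).
Proof. by move=> l; rewrite w_basis; case: eqP => // _; apply: ltW. Qed.

Lemma piX_dual_basis (x : 'I_r -> k) i : piX rho x (w i) = x i ^ D.
Proof.
rewrite /piX (bigD1 i) //= w_basis eqxx big1 ?mulr1 // => l /negbTE l_i.
by rewrite w_basis l_i expr0z.
Qed.

Lemma pairing_dual_basis_sum (I : pred 'I_r) l :
  pairing (fun j => \sum_(i | I i) w i j) (rho l) = if I l then D else 0.
Proof.
rewrite pairing_sum; under eq_bigr do rewrite w_basis.
case Il: (I l); last by apply: big1 => i Ii; case: eqP => // li; rewrite li Ii in Il.
rewrite (bigD1 l) //= eqxx big1 ?addr0 // => i /andP [_ /negbTE].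
by rewrite eq_sym => ->.
Qed.

Lemma dual_basis_expansion m :
  no_torus_factors rho -> dual_mem rho m ->
  (fun j => `|D|%N%:Z * m j) = (fun j => \sum_i `|pairing m (rho i)|%N%:Z * w i j).
Proof.
move=> no_torus m_dual; apply: (pairing_inj no_torus) => l.
rewrite pairingZ pairing_sum (bigD1 l) //= pairingZ w_basis eqxx big1 ?addr0.
  by rewrite !gez0_abs ?(ltW D_gt0) // mulrC.
by move=> i /negbTE i_l; rewrite pairingZ w_basis eq_sym i_l mulr0.
Qed.

(* Adding a large multiple of \sum_(i | I i) w i makes m dual. *)
Lemma face_sub_dual (I : pred 'I_r) m :
  (forall l, ~~ I l -> pairing m (rho l) = 0) ->
  exists m1 m2, [/\ face_dual rho I m1, face_dual rho I m2 &
    forall l, pairing m (rho l) = pairing m1 (rho l) - pairing m2 (rho l)].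
Proof.
move=> m_face; pose c := (\sum_l `|pairing m (rho l)|%N)%N.
pose m2 j := c%:Z * \sum_(i | I i) w i j.
have m2_pairing l : pairing m2 (rho l) = c%:Z * (if I l then D else 0).
  by rewrite pairingZ pairing_dual_basis_sum.
exists (fun j => m j + m2 j), m2; split.
- split=> l; rewrite pairingD m2_pairing; last first.
    by move=> l_I; rewrite (negbTE l_I) m_face // mulr0 addr0.
  case Il: (I l); last by rewrite mulr0 addr0 m_face ?Il.
  have : (`|pairing m (rho l)|%N <= c)%N by rewrite /c (bigD1 l) //= leq_addr.
  move: (pairing m (rho l)) D_gt0 => p; nia.
- split=> l; rewrite m2_pairing; last by move=> /negbTE->; rewrite mulr0.
  by case: (I l); rewrite ?mulr0 // mulr_ge0 // ltW.
- by move=> l; rewrite pairingD addrK.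
Qed.

Section Fibers.
Hypothesis no_torus : no_torus_factors rho.

Lemma Xpoint_dual_basis (u : ('I_n -> int) -> k) m :
  Xpoint rho u -> dual_mem rho m ->
  u m ^+ `|D|%N = \prod_i u (w i) ^+ `|pairing m (rho i)|%N.
Proof.
move=> u_X m_dual; rewrite -(XpointMn u_X) // dual_basis_expansion // (Xpoint_sum u_X).
  by apply: eq_bigr => i _; rewrite (XpointMn u_X) //; apply: dual_basis_dual.
by move=> i; apply/dual_memZ/dual_basis_dual.
Qed.

Lemma Xpoint_neq0 (u : ('I_n -> int) -> k) m :
  Xpoint rho u -> dual_mem rho m ->
  (u m != 0) = [forall i, (pairing m (rho i) != 0) ==> (u (w i) != 0)].
Proof.
move=> u_X m_dual.
have -> : (u m != 0) = (u m ^+ `|D|%N != 0) by rewrite expf_eq0 absz_gt0 gt_eqF.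
rewrite Xpoint_dual_basis //; apply/prodf_neq0/forallP => [uw_neq0 i|uw_neq0 i _].
  by apply/implyP => mi; move: (uw_neq0 i isT); rewrite expf_eq0 absz_gt0 mi.
by rewrite expf_eq0 absz_gt0 negb_and -implybE uw_neq0.
Qed.

(* [u] is a character on the face where it does not vanish; extending it to
   the torus and putting zeros elsewhere gives a preimage. *)
Lemma fiber_nonempty (u : ('I_n -> int) -> k) :
  Xpoint rho u -> exists x, in_fiber rho u x.
Proof.
move=> u_X; pose I := [pred l | u (w l) != 0].
have face_neq0 m : face_dual rho I m -> u m != 0.
  move=> [m_dual m_face]; rewrite Xpoint_neq0 //; apply/forallP => l; apply/implyP.
  by apply: contraR => /m_face ->.
have [y [y_neq0 y_u]] := monoid_char_extend no_torus (@face_dualD _ _ rho I) face_neq0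
  (fun m m' m_face m'_face => proj2 u_X m m' m_face.1 m'_face.1).
exists (fun l => if I l then y l else 0) => m m_dual.
have := Xpoint_neq0 u_X m_dual.
have [um0 /esym/negbT|um_neq0 /esym/forallP m_I] := eqVneq (u m) 0.
  rewrite um0 negb_forall => /existsP [l]; rewrite negb_imply => /andP [ml /negPn ul0].
  by apply: (piX_eq0 ml); rewrite /= ul0.
have m_face : face_dual rho I m.
  by split=> // l; apply: contraNeq => ml; have := implyP (m_I l) ml.
rewrite y_u //; apply: eq_bigr => l _; case: ifP => // /negbT /m_face.2 ->.
by rewrite !expr0z.
Qed.

End Fibers.

(* Two points of a fiber have the same zeros; the ratio of their nonzero
   coordinates is a character trivial on the corresponding face, which
   extends to an element of G. *)
Lemma fiber_in_orbit (u : ('I_n -> int) -> k) x0 x :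
  in_fiber rho u x0 -> in_fiber rho u x ->
  exists t, Gmem rho t /\ forall i, x i = act t x0 i.
Proof.
move=> x0_u x_u; pose I := [pred l | x0 l != 0].
have same_zeros i : (x i == 0) = (x0 i == 0).
  have := x_u _ (dual_basis_dual i); rewrite -(x0_u _ (dual_basis_dual i)) !piX_dual_basis.
  by move/(congr1 (eq_op^~ 0)); rewrite /= !expfz_eq0 gt_eqF.
pose ratio l := if I l then x l / x0 l else 1.
have ratio_neq0 l : ratio l != 0.
  rewrite /ratio; case: ifP => [x0l|_]; last exact: oner_neq0.
  by rewrite mulf_neq0 ?invr_eq0 // same_zeros.
have ratio_dual m : face_dual rho I m -> \prod_l ratio l ^ pairing m (rho l) = 1.
  move=> [m_dual m_face].
  have piX_I (y : 'I_r -> k) :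
      piX rho y m = \prod_l (if I l then y l else 1) ^ pairing m (rho l).
    by apply: eq_bigr => l _; case: ifP => // /negbT /m_face ->; rewrite !expr0z.
  have piX_x0_neq0 : piX rho x0 m != 0.
    by rewrite piX_I prod_exprz_neq0 // => l; case: ifP => // _; exact: oner_neq0.
  rewrite -[RHS](divff piX_x0_neq0) [in X in X / _]x0_u // -x_u // !piX_I -prodf_div.
  apply: eq_bigr => l _; rewrite /ratio; case: ifP => _; last by rewrite exp1rz divr1.
  by rewrite expfzMl exprz_inv invr_expz.
have ratio_face m :
    (forall l, ~~ I l -> pairing m (rho l) = 0) -> \prod_l ratio l ^ pairing m (rho l) = 1.
  move=> /face_sub_dual [m1 [m2 [m1_face m2_face m12]]].
  under eq_bigr do rewrite m12.
  by rewrite (prod_exprzB ratio_neq0) !ratio_dual // divr1.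
have [t [t_G t_ratio]] := Gmem_extend ratio_neq0 ratio_face.
exists t; split=> // i; rewrite /act.
have [x0i|x0i] := eqVneq (x0 i) 0.
  by rewrite x0i mulr0; apply/eqP; rewrite same_zeros x0i.
have Ii : I i by [].
by rewrite t_ratio // /ratio Ii divfK.
Qed.

Lemma Xpoint_in_U (u : ('I_n -> int) -> k) :
  no_torus_factors rho -> Xpoint rho u -> in_U rho u.
Proof.
move=> no_torus u_X; have [x0 x0_u] := fiber_nonempty no_torus u_X.
exists x0 => x; split; first exact: fiber_in_orbit x0_u.
move=> [t [[_ t_G] x_tx0]] m m_dual; rewrite -(x0_u m m_dual) /piX.
under eq_bigr do rewrite x_tx0 /act expfzMl.
by rewrite big_split /= t_G mul1r.
Qed.

End DualBasis.

Theorem lemma3p1 (k : closedFieldType) (n r : nat) (rho : 'I_r -> 'I_n -> int) :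
  [pchar k] =i pred0 ->
  strongly_convex rho ->
  ray_generators rho ->
  no_torus_factors rho ->
  exists S : 'X_{1..r} -> Prop,
    [/\ forall m, S m -> m != 0%MM /\ G_invariant rho ('X_[m] : {mpoly k[r]}),
        generates_inv k rho S,
        (forall x : 'I_r -> k, (forall m, S m -> ('X_[m] : {mpoly k[r]}).@[x] = 0) ->
           in_fiber rho (piX rho (fun _ => 0)) x) &
        ((exists u : ('I_n -> int) -> k, Xpoint rho u /\ ~ in_U rho u) ->
         forall x : 'I_r -> k, (forall m, S m -> ('X_[m] : {mpoly k[r]}).@[x] = 0) ->
           ~ in_U rho (piX rho x))].
Proof.
move=> k_pchar0 _ _ no_torus.
exists (invariant_monomial k rho); split.
- by [].
- exact: generates_inv_monomials.
- exact: common_zero_in_fiber0.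
- move=> [u [u_X u_notU]] x x_zero x_U; apply: u_notU.
  have o_U : in_U rho (piX rho (fun _ => 0 : k)).
    exact: in_U_eq (common_zero_in_fiber0 x_zero) x_U.
  have [D [w [D_gt0 w_basis]]] := exists_dual_basis (in_U0_isolated_ray o_U).
  exact: (Xpoint_in_U D_gt0 w_basis no_torus u_X).
Qed.
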